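(* Let $X$ be the killed diffusion on $(0,\infty)$ described in the context. If $$\liminf_{z\to\infty}z^{-2}\bigl(b(z)^2+b'(z)+2\kappa(z)\bigr)>-\infty\quad\text{or}\quad\kappa\equiv0,$$ then the differential operator $\mathcal{L}^*\phi=\tfrac12\phi''-(b\phi)'-\kappa\phi$ is in the limit-point case at $\infty$.
   Context: $X$ is a one-dimensional diffusion on $(0,\infty)$ with diffusion coefficient identically $1$, drift $b\in C^1((0,\infty))$ and continuous killing rate $\kappa\ge0$; the endpoint $0$ is regular and the endpoint $\infty$ is inaccessible (natural or entrance). ''Limit-point case at $\infty$'' refers to Weyl's classification of singular Sturm–Liouville operators. *)

From Stdlib Require Import Reals.
From Coquelicot Require Import Coquelicot.
Open Scope R_scope.

(* Killed diffusion on (0,oo): generator L f = 1/2 f'' + b f' - kappa f.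
   Reference point c = 1. *)

Definition scale_dens (b : R -> R) (x : R) : R := exp (- 2 * RInt b 1 x).
Definition speed_dens (b : R -> R) (x : R) : R := 2 * exp (2 * RInt b 1 x).

Definition C1_pos (b : R -> R) : Prop :=
  forall x, 0 < x -> ex_derive b x /\ continuous (Derive b) x.

Definition regular_at_0 (b : R -> R) : Prop :=
  ex_RInt_gen (scale_dens b) (at_right 0) (at_point 1) /\
  ex_RInt_gen (speed_dens b) (at_right 0) (at_point 1).

(* oo accessible (exit or regular) iff int_1^oo (M(x)-M(1)) dS(x) < oo;
   inaccessible (natural or entrance) otherwise. *)
Definition inaccessible_at_infty (b : R -> R) : Prop :=
  ~ ex_RInt_gen (fun x => scale_dens b x * RInt (speed_dens b) 1 x)
      (at_point 1) (Rbar_locally p_infty).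

Definition Lstar (b kappa u : R -> R) (x : R) : R :=
  / 2 * Derive (Derive u) x - Derive (fun y => b y * u y) x - kappa x * u x.

Definition twice_diff_pos (u : R -> R) : Prop :=
  forall x, 0 < x -> ex_derive u x /\ ex_derive (Derive u) x.

(* phi = u + i v solves L* phi = lambda phi on (0,oo), lambda = alpha + i beta. *)
Definition is_eigensol (b kappa : R -> R) (alpha beta : R) (u v : R -> R) : Prop :=
  twice_diff_pos u /\ twice_diff_pos v /\
  forall x, 0 < x ->
    Lstar b kappa u x = alpha * u x - beta * v x /\
    Lstar b kappa v x = beta * u x + alpha * v x.

(* |phi|^2 integrable near oo w.r.t. the symmetrizing weight s(x) dx of L*. *)
Definition L2_near_infty (b : R -> R) (u v : R -> R) : Prop :=
  ex_RInt_gen (fun x => (u x ^ 2 + v x ^ 2) * scale_dens b x)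
    (at_point 1) (Rbar_locally p_infty).

Definition limit_circle_at_infty (b kappa : R -> R) : Prop :=
  exists alpha beta : R, forall u v : R -> R,
    is_eigensol b kappa alpha beta u v -> L2_near_infty b u v.

Definition limit_point_at_infty (b kappa : R -> R) : Prop :=
  ~ limit_circle_at_infty b kappa.

(* With [B x = int_1^x b], the Liouville substitution [phi = 2 exp B psi] turns [L* phi = lambda phi]
   into the Schrodinger equation [psi'' = (V + 2 lambda) psi], [V = b^2 + b' + 2 kappa], and
   [|phi|^2 s = 4 |psi|^2] for the scale density [s = exp (-2 B)].  In the limit-circle case the two
   solutions [psi1], [psi2] with Wronskian 1 (built by Picard iteration) are therefore square
   integrable near infinity, which is impossible in either case of the hypothesis:
   - if [V >= - C x^2], square integrability of [psi] bounds [int |psi'|^2 / x^2], and then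
     [1/x <= (|psi1|^2 + |psi2|^2) / 2 + (|psi1'|^2 + |psi2'|^2) / (2 x^2)] would be integrable;
   - if [kappa = 0], [w = exp B * int_1^x exp (-2 B)] solves [w'' = (b^2 + b') w] and is not square
     integrable, since [w^2 + 1/w^2 >= 2]; yet variation of constants expresses [w] through [psi1],
     [psi2], whose small [L^2] tails force [int w^2] to stay bounded. *)

From Stdlib Require Import Reals Lra Lia Factorial.
From Coquelicot Require Import Coquelicot.
Open Scope R_scope.

(** * Continuity and integrals on the positive half-line *)

Lemma continuous_Rplus (f g : R -> R) x :
  continuous f x -> continuous g x -> continuous (fun t => f t + g t) x.
Proof. exact (continuous_plus f g x). Qed.

Lemma continuous_Rmult (f g : R -> R) x :
  continuous f x -> continuous g x -> continuous (fun t => f t * g t) x.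
Proof. exact (continuous_mult f g x). Qed.

Lemma continuous_Ropp (f : R -> R) x : continuous f x -> continuous (fun t => - f t) x.
Proof. exact (continuous_opp f x). Qed.

Lemma continuous_Rminus (f g : R -> R) x :
  continuous f x -> continuous g x -> continuous (fun t => f t - g t) x.
Proof. intros Hf Hg; apply continuous_Rplus; [|apply continuous_Ropp]; assumption. Qed.

Lemma continuous_Rpow (f : R -> R) n x : continuous f x -> continuous (fun t => f t ^ n) x.
Proof.
  intros Hf; induction n as [|n IH]; simpl.
  - apply continuous_const.
  - now apply continuous_Rmult.
Qed.

Lemma continuous_Rdiv (f g : R -> R) x :
  continuous f x -> continuous g x -> g x <> 0 -> continuous (fun t => f t / g t) x.
Proof. intros; apply continuous_Rmult; [|apply continuous_Rinv_comp]; auto. Qed.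

Lemma continuous_Rexp (f : R -> R) x : continuous f x -> continuous (fun t => exp (f t)) x.
Proof. intros Hf; apply (continuous_comp f exp); [exact Hf | apply continuous_exp]. Qed.

Definition cont_on_pos (f : R -> R) : Prop := forall t, 0 < t -> continuous f t.

Ltac solve_continuous :=
  repeat match goal with
  | |- continuous _ _ => assumption
  | H : cont_on_pos ?f |- continuous ?f _ => apply H; lra
  | H : forall t, 0 < t -> continuous ?f t |- continuous ?f _ => apply H; lra
  | |- continuous (fun _ => ?c) _ => apply continuous_const
  | |- continuous (fun t => t) _ => apply continuous_id
  | |- continuous (fun t => _ + _) _ => apply continuous_Rplus
  | |- continuous (fun t => _ - _) _ => apply continuous_Rminus
  | |- continuous (fun t => _ / _) _ => apply continuous_Rdiv
  | |- continuous (fun t => _ * _) _ => apply continuous_Rmult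
  | |- continuous (fun t => - _) _ => apply continuous_Ropp
  | |- continuous (fun t => _ ^ _) _ => apply continuous_Rpow
  | |- continuous (fun t => / _) _ => apply continuous_Rinv_comp
  | |- continuous (fun t => exp _) _ => apply continuous_Rexp
  | |- continuous (fun t => Rabs _) _ => apply continuous_Rabs_comp
  | |- continuous (Rminus ?a) ?x => change (continuous (fun t => a - t) x)
  (* [Rminus a] is the eta-reduced [fun t => a - t]; the last two cases are side conditions of [/]. *)
  | |- _ ^ _ <> 0 => apply pow_nonzero, Rgt_not_eq; lra
  | |- _ <> 0 => apply Rgt_not_eq; lra
  end.

Ltac solve_cont_on_pos :=
  let t := fresh "t" in let Ht := fresh "Ht" in intros t Ht; solve [solve_continuous].

Lemma is_derive_continuous_R (f : R -> R) x l : is_derive f x l -> continuous f x.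
Proof.
  intros Hf; apply (ex_derive_continuous (K := R_AbsRing) (V := R_NormedModule)).
  now exists l.
Qed.

Lemma locally_pos x : 0 < x -> locally x (fun y => 0 < y).
Proof. intros Hx; apply (locally_interval _ x 0 p_infty); simpl; auto. Qed.

Lemma ex_RInt_cont_on (f : R -> R) a b :
  (forall t, Rmin a b <= t <= Rmax a b -> continuous f t) -> ex_RInt f a b.
Proof. exact (ex_RInt_continuous (V := R_CompleteNormedModule) f a b). Qed.

Lemma between_pos a b t : 0 < a -> 0 < b -> Rmin a b <= t <= Rmax a b -> 0 < t.
Proof. unfold Rmin, Rmax; destruct (Rle_dec a b); lra. Qed.

Lemma ex_RInt_pos (f : R -> R) a b : 0 < a -> 0 < b -> cont_on_pos f -> ex_RInt f a b.
Proof.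
  intros Ha Hb Hf; apply ex_RInt_cont_on; intros t Ht.
  exact (Hf t (between_pos a b t Ha Hb Ht)).
Qed.

Lemma RInt_Chasles_pos (f : R -> R) a b c : 0 < a -> 0 < b -> 0 < c -> cont_on_pos f ->
  RInt f a c = RInt f a b + RInt f b c.
Proof.
  intros; symmetry; apply (RInt_Chasles (V := R_CompleteNormedModule)); now apply ex_RInt_pos.
Qed.

Lemma RInt_plus_pos (f g : R -> R) a b : 0 < a -> 0 < b -> cont_on_pos f -> cont_on_pos g ->
  RInt (fun x => f x + g x) a b = RInt f a b + RInt g a b.
Proof. intros; apply (RInt_plus (V := R_CompleteNormedModule)); now apply ex_RInt_pos. Qed.

Lemma RInt_scal_R (f : R -> R) k a b : ex_RInt f a b ->
  RInt (fun x => k * f x) a b = k * RInt f a b.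
Proof. exact (RInt_scal (V := R_CompleteNormedModule) f a b k). Qed.

Lemma RInt_scal_pos (f : R -> R) k a b : 0 < a -> 0 < b -> cont_on_pos f ->
  RInt (fun x => k * f x) a b = k * RInt f a b.
Proof. intros; apply RInt_scal_R; now apply ex_RInt_pos. Qed.

Lemma RInt_const_R (k a b : R) : RInt (fun _ => k) a b = k * (b - a).
Proof. rewrite RInt_const; unfold scal; simpl; unfold mult; simpl; ring. Qed.

Lemma RInt_le_on (f g : R -> R) a b : a <= b ->
  (forall t, a <= t <= b -> continuous f t) -> (forall t, a <= t <= b -> continuous g t) ->
  (forall t, a <= t <= b -> f t <= g t) -> RInt f a b <= RInt g a b.
Proof.
  intros Hab Hf Hg Hfg; apply RInt_le; auto.
  - apply ex_RInt_cont_on; intros t; rewrite Rmin_left, Rmax_right by lra; apply Hf.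
  - apply ex_RInt_cont_on; intros t; rewrite Rmin_left, Rmax_right by lra; apply Hg.
  - intros t Ht; apply Hfg; lra.
Qed.

Lemma RInt_le_pos (f g : R -> R) a b : 0 < a -> a <= b -> cont_on_pos f -> cont_on_pos g ->
  (forall t, a <= t <= b -> f t <= g t) -> RInt f a b <= RInt g a b.
Proof. intros Ha Hab Hf Hg; apply RInt_le_on; auto; intros t Ht; [apply Hf | apply Hg]; lra. Qed.

Lemma RInt_ge_0_pos (f : R -> R) a b : 0 < a -> a <= b -> cont_on_pos f ->
  (forall t, a <= t <= b -> 0 <= f t) -> 0 <= RInt f a b.
Proof.
  intros Ha Hab Hf Hpos; rewrite <- (Rmult_0_l (b - a)), <- RInt_const_R.
  apply RInt_le_pos; auto; intros t _; apply continuous_const.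
Qed.

Lemma RInt_nonneg_mono_l (f : R -> R) a1 a X : 0 < a1 -> a1 <= a -> a <= X -> cont_on_pos f ->
  (forall t, 0 < t -> 0 <= f t) -> RInt f a X <= RInt f a1 X.
Proof.
  intros H1 H2 H3 Hc Hf; rewrite (RInt_Chasles_pos f a1 a X); try lra; auto.
  assert (0 <= RInt f a1 a) by (apply RInt_ge_0_pos; try lra; auto; intros; apply Hf; lra); lra.
Qed.

Lemma RInt_nonneg_mono_r (f : R -> R) a X Y : 0 < a -> a <= X -> X <= Y -> cont_on_pos f ->
  (forall t, 0 < t -> 0 <= f t) -> RInt f a X <= RInt f a Y.
Proof.
  intros H1 H2 H3 Hc Hf; rewrite (RInt_Chasles_pos f a X Y); try lra; auto.
  assert (0 <= RInt f X Y) by (apply RInt_ge_0_pos; try lra; auto; intros; apply Hf; lra); lra.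
Qed.

Lemma RInt_derive_on (f df : R -> R) a b : a <= b ->
  (forall x, a <= x <= b -> is_derive f x (df x)) ->
  (forall x, a <= x <= b -> continuous df x) -> RInt df a b = f b - f a.
Proof.
  intros Hab Hd Hc; apply is_RInt_unique.
  apply (is_RInt_derive (V := R_CompleteNormedModule)); rewrite Rmin_left, Rmax_right by lra;
  [apply Hd | apply Hc].
Qed.

Lemma RInt_derive_pos (f df : R -> R) a b : 0 < a -> a <= b ->
  (forall x, 0 < x -> is_derive f x (df x)) -> cont_on_pos df -> RInt df a b = f b - f a.
Proof. intros Ha Hab Hd Hc; apply RInt_derive_on; auto; intros x Hx; [apply Hd | apply Hc]; lra. Qed.

Lemma RInt_Rinv a b : 0 < a -> a <= b -> RInt (fun x => / x) a b = ln b - ln a.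
Proof.
  intros Ha Hab; apply RInt_derive_pos; auto.
  - intros; now apply is_derive_ln.
  - intros x Hx; solve_continuous.
Qed.

Lemma RInt_Rinv_unbounded a M : 0 < a -> exists X, a <= X /\ M < RInt (fun x => / x) a X.
Proof.
  intros Ha; exists (a * exp (Rabs M + 1)).
  assert (HX : a <= a * exp (Rabs M + 1)).
  { rewrite <- (Rmult_1_r a) at 1; apply Rmult_le_compat_l; [lra |].
    generalize (exp_ineq1_le (Rabs M + 1)) (Rabs_pos M); lra. }
  split; auto; rewrite RInt_Rinv, ln_mult, ln_exp by (lra || apply exp_pos).
  generalize (Rle_abs M); lra.
Qed.

Lemma is_derive_RInt_pos (g : R -> R) x : 0 < x -> cont_on_pos g ->
  is_derive (fun y => RInt g 1 y) x (g x).
Proof.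
  intros Hx Hg; apply is_derive_RInt with (a := 1); [|now apply Hg].
  generalize (locally_pos x Hx); apply filter_imp; intros y Hy.
  apply RInt_correct, ex_RInt_pos; auto; lra.
Qed.

Lemma derive_zero_const_pos (f : R -> R) :
  (forall x, 0 < x -> is_derive f x 0) -> forall X, 1 <= X -> f X = f 1.
Proof.
  intros Hf X HX.
  assert (E := RInt_derive_pos f (fun _ => 0) 1 X ltac:(lra) HX Hf (fun t _ => continuous_const 0 t)).
  rewrite RInt_const_R in E; lra.
Qed.

Ltac fold_Derive :=
  repeat match goal with
  | |- context [Derive (fun x0 => ?f x0) ?y] => change (Derive (fun x0 => f x0) y) with (Derive f y)
  end.

Ltac ex_derive_hyps :=
  repeat match goal with
  | H : is_derive ?f ?x ?v |- ex_derive ?f ?x => exists v; exact H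
  | H : is_derive ?f ?x ?v |- ex_derive (fun x0 => ?f x0) ?x => exists v; exact H
  | |- _ /\ _ => split
  | |- True => exact I
  end.

(* Coquelicot states some equalities in [AbsRing.sort R_AbsRing], where [ring] and [field] fail. *)
Ltac as_R_eq := match goal with |- ?A = ?B => change (@eq R A B) end.

Ltac rewrite_derive_hyps :=
  fold_Derive;
  repeat match goal with
  | H : is_derive ?f ?x ?v |- _ => progress rewrite ?(is_derive_unique f x v H)
  end;
  as_R_eq.

Lemma discriminant_le_of_nonneg (A B C : R) : 0 <= A ->
  (forall t, 0 <= A * t ^ 2 - 2 * B * t + C) -> B ^ 2 <= A * C.
Proof.
  intros HA H; destruct (Req_dec A 0) as [->|HA0].
  - destruct (Req_dec B 0) as [->|HB]; [nra |].
    specialize (H ((C + 1) / (2 * B))).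
    replace (0 * ((C + 1) / (2 * B)) ^ 2 - 2 * B * ((C + 1) / (2 * B)) + C) with (-1) in H
      by (field; auto); lra.
  - specialize (H (B / A)).
    replace (A * (B / A) ^ 2 - 2 * B * (B / A) + C) with ((A * C - B ^ 2) / A) in H by (field; auto).
    apply Rmult_le_compat_r with (r := A) in H; [|lra].
    unfold Rdiv in H; rewrite Rmult_0_l, Rmult_assoc, Rinv_l in H by auto; lra.
Qed.

Lemma RInt_Cauchy_Schwarz (f g : R -> R) a b : 0 < a -> a <= b -> cont_on_pos f -> cont_on_pos g ->
  RInt (fun x => f x * g x) a b ^ 2 <= RInt (fun x => f x ^ 2) a b * RInt (fun x => g x ^ 2) a b.
Proof.
  intros Ha Hab Hf Hg; apply discriminant_le_of_nonneg.
  - apply RInt_ge_0_pos; auto; [solve_cont_on_pos |].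
    intros; apply pow2_ge_0.
  - intros t.
    replace (RInt (fun x => f x ^ 2) a b * t ^ 2 - 2 * RInt (fun x => f x * g x) a b * t
             + RInt (fun x => g x ^ 2) a b)
      with (RInt (fun x => (t ^ 2 * f x ^ 2 + (- 2 * t) * (f x * g x)) + g x ^ 2) a b).
    + apply RInt_ge_0_pos; try lra; [| intros s _; generalize (pow2_ge_0 (t * f s - g s)); nra].
      solve_cont_on_pos.
    + rewrite RInt_plus_pos, RInt_plus_pos, !RInt_scal_pos by
        (try lra; solve_cont_on_pos).
      as_R_eq; ring.
Qed.

(** * Picard iteration for linear systems *)

Lemma RInt_pow_sub_1 (m : nat) (x : R) :
  RInt (fun t => (t - 1) ^ m) 1 x = (x - 1) ^ S m / INR (S m).
Proof.
  assert (Hm : 0 < INR (S m)) by (apply lt_0_INR; lia).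
  apply is_RInt_unique.
  replace ((x - 1) ^ S m / INR (S m))
    with ((x - 1) ^ S m / INR (S m) - (1 - 1) ^ S m / INR (S m))
    by (rewrite Rminus_diag, pow_i by lia; field; lra).
  apply (is_RInt_derive (fun t => (t - 1) ^ S m / INR (S m))).
  - intros t _; auto_derive; auto.
    change (match m with 0%nat => 1 | S _ => INR m + 1 end) with (INR (S m)).
    unfold Rminus; field; lra.
  - intros t _; solve_continuous.
Qed.

Lemma RInt_pow_1_sub (m : nat) (x : R) :
  RInt (fun t => (1 - t) ^ m) x 1 = (1 - x) ^ S m / INR (S m).
Proof.
  assert (Hm : 0 < INR (S m)) by (apply lt_0_INR; lia).
  apply is_RInt_unique.
  replace ((1 - x) ^ S m / INR (S m))
    with (- (1 - 1) ^ S m / INR (S m) - - (1 - x) ^ S m / INR (S m))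
    by (rewrite Rminus_diag, pow_i by lia; field; lra).
  apply (is_RInt_derive (fun t => - (1 - t) ^ S m / INR (S m))).
  - intros t _; auto_derive; auto.
    change (match m with 0%nat => 1 | S _ => INR m + 1 end) with (INR (S m)).
    unfold Rminus; field; lra.
  - intros t _; solve_continuous.
Qed.

Lemma abs_RInt_le_pow (f : R -> R) (x B : R) (m : nat) :
  (forall t, Rmin 1 x <= t <= Rmax 1 x -> continuous f t) ->
  (forall t, Rmin 1 x <= t <= Rmax 1 x -> Rabs (f t) <= B * Rabs (t - 1) ^ m) ->
  Rabs (RInt f 1 x) <= B * Rabs (x - 1) ^ S m / INR (S m).
Proof.
  intros Hc Hb; replace (B * Rabs (x - 1) ^ S m / INR (S m))
    with (B * (Rabs (x - 1) ^ S m / INR (S m))) by (unfold Rdiv; ring).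
  destruct (Rle_dec 1 x) as [H1|H1].
  - rewrite Rmin_left, Rmax_right in Hc, Hb by lra.
    rewrite (Rabs_right (x - 1)), <- RInt_pow_sub_1, <- RInt_scal_R by
      (lra || (apply ex_RInt_cont_on; intros; solve_continuous)).
    eapply Rle_trans;
      [apply abs_RInt_le; [lra | apply ex_RInt_cont_on; rewrite Rmin_left, Rmax_right by lra; exact Hc] |].
    apply RInt_le_on; auto; intros; solve_continuous; auto.
    rewrite <- (Rabs_right (t - 1)) by lra; apply Hb; lra.
  - rewrite Rmin_right, Rmax_left in Hc, Hb by lra.
    assert (Ef : ex_RInt f x 1) by (apply ex_RInt_cont_on; rewrite Rmin_left, Rmax_right by lra; exact Hc).
    rewrite <- opp_RInt_swap by exact Ef.
    change (Rabs (opp (RInt f x 1))) with (Rabs (- RInt f x 1)); rewrite Rabs_Ropp.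
    rewrite (Rabs_left (x - 1)), Ropp_minus_distr, <- RInt_pow_1_sub, <- RInt_scal_R by
      (lra || (apply ex_RInt_cont_on; intros; solve_continuous)).
    eapply Rle_trans; [apply abs_RInt_le; [lra | exact Ef] |].
    apply RInt_le_on; try lra; intros; solve_continuous; auto.
    replace (1 - t) with (Rabs (t - 1)) by (rewrite Rabs_minus_sym; apply Rabs_right; lra).
    apply Hb; lra.
Qed.

Lemma halving_eventually_lt (cc : nat -> R) N0 :
  (forall k, 0 <= cc k) -> (forall k, (N0 <= k)%nat -> cc (S k) <= cc k / 2) ->
  forall eps, 0 < eps -> exists N, (N0 <= N)%nat /\ forall k, (N <= k)%nat -> cc k < eps.
Proof.
  intros H0 Hh eps He.
  assert (Hk : forall k, cc (N0 + k)%nat <= cc N0 * (/ 2) ^ k).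
  { induction k as [|k IH]; [rewrite Nat.add_0_r; simpl; lra |].
    replace (N0 + S k)%nat with (S (N0 + k)) by lia.
    eapply Rle_trans; [apply Hh; lia | simpl; lra]. }
  assert (Hy : 0 < eps / (cc N0 + 1)) by (apply Rdiv_lt_0_compat; auto; generalize (H0 N0); lra).
  destruct (pow_lt_1_zero (/ 2) ltac:(rewrite Rabs_right; lra) _ Hy) as [N1 HN1].
  exists (N0 + N1)%nat; split; [lia |]; intros k Hk'.
  replace k with (N0 + (k - N0))%nat by lia.
  specialize (HN1 (k - N0)%nat ltac:(lia)); rewrite Rabs_right in HN1 by (apply Rle_ge, pow_le; lra).
  eapply Rle_lt_trans; [apply Hk |].
  generalize (H0 N0); intros.
  apply Rle_lt_trans with (cc N0 * (eps / (cc N0 + 1))); [apply Rmult_le_compat_l; lra |].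
  replace (cc N0 * (eps / (cc N0 + 1))) with (eps * (cc N0 / (cc N0 + 1))) by (field; lra).
  rewrite <- (Rmult_1_r eps) at 2; apply Rmult_lt_compat_l; auto.
  apply (Rmult_lt_reg_r (cc N0 + 1)); [lra |]; field_simplify; lra.
Qed.

Lemma halving_increments_bound (u cc : nat -> R) N0 :
  (forall k, (N0 <= k)%nat -> cc (S k) <= cc k / 2) ->
  (forall k, (N0 <= k)%nat -> Rabs (u (S k) - u k) <= cc k) ->
  forall k j, (N0 <= k)%nat -> Rabs (u (k + j)%nat - u k) <= 2 * cc k - 2 * cc (k + j)%nat.
Proof.
  intros Hh Hu k j Hk; induction j as [|j IH].
  - rewrite Nat.add_0_r, Rminus_diag, Rabs_R0; lra.
  - replace (k + S j)%nat with (S (k + j)) by lia.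
    replace (u (S (k + j)) - u k) with ((u (S (k + j)) - u (k + j)%nat) + (u (k + j)%nat - u k)) by ring.
    eapply Rle_trans; [apply Rabs_triang |].
    generalize (Hu (k + j)%nat ltac:(lia)) (Hh (k + j)%nat ltac:(lia)); lra.
Qed.

Lemma Lim_seq_dist_le_halving (u cc : nat -> R) N0 :
  (forall k, 0 <= cc k) -> (forall k, (N0 <= k)%nat -> cc (S k) <= cc k / 2) ->
  (forall k, (N0 <= k)%nat -> Rabs (u (S k) - u k) <= cc k) ->
  forall k, (N0 <= k)%nat -> Rabs (real (Lim_seq u) - u k) <= 2 * cc k.
Proof.
  intros H0 Hh Hu.
  assert (Hc := halving_increments_bound u cc N0 Hh Hu).
  assert (Ex : ex_finite_lim_seq u).
  { apply ex_lim_seq_cauchy_corr; intros eps.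
    destruct (halving_eventually_lt cc N0 H0 Hh (eps / 4)) as [N [HN1 HN2]];
      [generalize (cond_pos eps); lra |].
    exists N; intros k m Hk Hm.
    replace (u k - u m) with ((u (N + (k - N))%nat - u N) - (u (N + (m - N))%nat - u N))
      by (replace (N + (k - N))%nat with k by lia; replace (N + (m - N))%nat with m by lia; ring).
    eapply Rle_lt_trans; [apply Rabs_triang |]; rewrite Rabs_Ropp.
    generalize (Hc N (k - N)%nat HN1) (Hc N (m - N)%nat HN1) (HN2 N (le_n _))
      (H0 (N + (k - N))%nat) (H0 (N + (m - N))%nat); lra. }
  destruct Ex as [l Hl]; rewrite (is_lim_seq_unique _ _ Hl); simpl.
  intros k Hk; apply Rnot_lt_le; intros Hlt.
  assert (He : 0 < Rabs (l - u k) - 2 * cc k) by lra.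
  apply is_lim_seq_spec in Hl; destruct (Hl (mkposreal _ He)) as [M HM]; simpl in HM.
  specialize (HM (k + M)%nat ltac:(lia)); specialize (Hc k M Hk).
  assert (Rabs (l - u k) <= Rabs (u (k + M)%nat - l) + Rabs (u (k + M)%nat - u k)).
  { replace (l - u k) with (- (u (k + M)%nat - l) + (u (k + M)%nat - u k)) by ring.
    eapply Rle_trans; [apply Rabs_triang | rewrite Rabs_Ropp; lra]. }
  generalize (H0 (k + M)%nat); lra.
Qed.

Lemma pow_fact_halving (q D : R) : 0 <= q -> 0 <= D -> exists N0, forall k, (N0 <= k)%nat ->
  D * q ^ S (S k) / INR (fact (S (S k))) <= D * q ^ S k / INR (fact (S k)) / 2.
Proof.
  intros Hq HD; destruct (INR_unbounded (2 * q)) as [N0 HN0]; exists N0; intros k Hk.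
  apply le_INR in Hk.
  change (fact (S (S k))) with (S (S k) * fact (S k))%nat; rewrite mult_INR.
  change (q ^ S (S k)) with (q * q ^ S k).
  assert (Hf : 0 < INR (fact (S k))) by (apply lt_0_INR, lt_O_fact).
  assert (0 <= D * q ^ S k) by (apply Rmult_le_pos; auto; apply pow_le; auto).
  rewrite !S_INR; generalize (pos_INR k); intros.
  apply (Rmult_le_reg_r (2 * ((INR k + 1 + 1) * INR (fact (S k))))); [nra |].
  field_simplify; [nra | lra | split; lra].
Qed.

(* Vectors of [R^n] are encoded as [nat -> R]; components of index [>= n] are ignored. *)
Fixpoint norm1 (n : nat) (y : nat -> R) : R :=
  match n with O => 0 | S m => norm1 m y + Rabs (y m) end.

Lemma norm1_ge_0 n y : 0 <= norm1 n y.
Proof. induction n as [|n IH]; simpl; [lra | generalize (Rabs_pos (y n)); lra]. Qed.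

Lemma Rabs_le_norm1 n y j : (j < n)%nat -> Rabs (y j) <= norm1 n y.
Proof.
  induction n as [|n IH]; intros Hj; [lia | simpl].
  destruct (Nat.eq_dec j n) as [->|Hne]; [generalize (norm1_ge_0 n y); lra |].
  generalize (IH ltac:(lia)) (Rabs_pos (y n)); lra.
Qed.

Lemma norm1_le n y B : (forall j, (j < n)%nat -> Rabs (y j) <= B) -> norm1 n y <= INR n * B.
Proof.
  induction n as [|n IH]; intros HB; [simpl; lra |].
  change (norm1 (S n) y) with (norm1 n y + Rabs (y n)); rewrite S_INR.
  generalize (IH (fun j Hj => HB j ltac:(lia))) (HB n ltac:(lia)); lra.
Qed.

Lemma continuous_bounded_on (f : R -> R) l r : l <= r ->
  (forall t, l <= t <= r -> continuous f t) -> exists K, forall t, l <= t <= r -> f t <= K.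
Proof.
  intros Hlr Hf; destruct (continuity_ab_maj f l r Hlr) as [t0 [Ht0 _]].
  - intros t Ht; apply continuity_pt_filterlim, Hf, Ht.
  - now exists (f t0).
Qed.

Lemma locally_in_interval l r x : l < x < r -> locally x (fun y => l <= y <= r).
Proof.
  intros Hx; apply (locally_interval _ x l r); simpl; try lra; intros; lra.
Qed.

Lemma interval_around x : 0 < x -> exists l r, 0 < l /\ l <= 1 /\ 1 <= r /\ l < x < r.
Proof.
  intros Hx; exists (Rmin x 1 / 2), (Rmax x 1 + 1).
  unfold Rmin, Rmax; destruct (Rle_dec x 1); repeat split; lra.
Qed.

Lemma eq_of_Rabs_lt_all a b : (forall eps, 0 < eps -> Rabs (a - b) < eps) -> a = b.
Proof.
  intros H; destruct (Req_dec a b) as [|Hne]; auto.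
  specialize (H _ (Rabs_pos_lt (a - b) ltac:(lra))); lra.
Qed.

Section LinearSystem.

Variable n : nat.
Variables (F : R -> (nat -> R) -> nat -> R) (L : R -> R).
Hypothesis F_minus : forall t y z i, F t y i - F t z i = F t (fun j => y j - z j) i.
Hypothesis F_bound : forall t y i, (i < n)%nat -> Rabs (F t y i) <= L t * norm1 n y.
Hypothesis L_nonneg : forall t, 0 <= L t.
Hypothesis L_cont : cont_on_pos L.
Hypothesis F_cont : forall (Y : nat -> R -> R) i t, (i < n)%nat -> 0 < t ->
  (forall j, (j < n)%nat -> continuous (Y j) t) -> continuous (fun s => F s (fun j => Y j s) i) t.
Variable y0 : nat -> R.

Fixpoint picard (k : nat) : nat -> R -> R :=
  match k with
  | O => fun i _ => y0 i
  | S k => fun i x => y0 i + RInt (fun t => F t (fun j => picard k j t) i) 1 x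
  end.

Lemma picard_S k i x :
  picard (S k) i x = y0 i + RInt (fun t => F t (fun j => picard k j t) i) 1 x.
Proof. reflexivity. Qed.

Definition picard_lim (i : nat) (x : R) : R := real (Lim_seq (fun k => picard k i x)).

Lemma picard_cont k i x : (i < n)%nat -> 0 < x -> continuous (picard k i) x.
Proof.
  revert i x; induction k as [|k IH]; intros i x Hi Hx; simpl; [apply continuous_const |].
  apply continuous_Rplus; [apply continuous_const |].
  eapply is_derive_continuous_R, is_derive_RInt_pos; auto.
  intros t Ht; apply F_cont; auto.
Qed.

Lemma RInt_F_minus (Y Z : nat -> R -> R) i x : (i < n)%nat -> 0 < x ->
  (forall j, (j < n)%nat -> cont_on_pos (Y j)) -> (forall j, (j < n)%nat -> cont_on_pos (Z j)) ->
  RInt (fun t => F t (fun j => Y j t) i) 1 x - RInt (fun t => F t (fun j => Z j t) i) 1 x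
  = RInt (fun t => F t (fun j => Y j t - Z j t) i) 1 x.
Proof.
  intros Hi Hx HY HZ.
  rewrite <- (RInt_minus (V := R_CompleteNormedModule)) by
    (apply ex_RInt_pos; try lra; intros t Ht; apply F_cont; auto;
     intros j Hj; first [apply HY | apply HZ]; auto).
  apply RInt_ext; intros; apply F_minus.
Qed.

Lemma abs_RInt_F_le (v : nat -> R -> R) l r K C m x i : 0 < l -> l <= 1 -> 1 <= r -> l <= x <= r ->
  (i < n)%nat -> (forall t, l <= t <= r -> L t <= K) -> (forall j, (j < n)%nat -> cont_on_pos (v j)) ->
  (forall t, l <= t <= r -> norm1 n (fun j => v j t) <= C * Rabs (t - 1) ^ m) ->
  Rabs (RInt (fun t => F t (fun j => v j t) i) 1 x) <= K * C * Rabs (x - 1) ^ S m / INR (S m).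
Proof.
  intros Hl Hl1 Hr Hx Hi HK Hv HC.
  assert (Hsub : forall t, Rmin 1 x <= t <= Rmax 1 x -> l <= t <= r)
    by (intros t; unfold Rmin, Rmax; destruct (Rle_dec 1 x); lra).
  apply abs_RInt_le_pow.
  - intros t Ht; apply F_cont; auto; [generalize (Hsub t Ht); lra |].
    intros j Hj; apply Hv; auto; generalize (Hsub t Ht); lra.
  - intros t Ht; specialize (Hsub t Ht); rewrite Rmult_assoc.
    eapply Rle_trans; [apply F_bound; auto |].
    apply Rmult_le_compat; auto using norm1_ge_0.
Qed.

Definition picard_diff (k i : nat) (x : R) : R := picard (S k) i x - picard k i x.

Lemma picard_diff_0 i x : picard_diff 0 i x = RInt (fun t => F t (fun j => y0 j) i) 1 x.
Proof. unfold picard_diff; rewrite picard_S; simpl; ring. Qed.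

Lemma picard_diff_S k i x : (i < n)%nat -> 0 < x ->
  picard_diff (S k) i x = RInt (fun t => F t (fun j => picard_diff k j t) i) 1 x.
Proof.
  intros Hi Hx; unfold picard_diff; rewrite (picard_S (S k)), (picard_S k).
  rewrite <- RInt_F_minus by (auto; intros j Hj t Ht; apply picard_cont; auto).
  ring.
Qed.

Lemma picard_diff_bound l r K k x : 0 < l -> l <= 1 -> 1 <= r -> l <= x <= r ->
  (forall t, l <= t <= r -> L t <= K) ->
  norm1 n (fun i => picard_diff k i x)
  <= norm1 n y0 * (INR n * K) ^ S k * Rabs (x - 1) ^ S k / INR (fact (S k)).
Proof.
  intros Hl Hl1 Hr Hx HK; revert x Hx; induction k as [|k IH]; intros x Hx.
  - replace (norm1 n y0 * (INR n * K) ^ 1 * Rabs (x - 1) ^ 1 / INR (fact 1))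
      with (INR n * (K * norm1 n y0 * Rabs (x - 1) ^ 1 / INR 1)) by (simpl; field).
    apply norm1_le; intros i Hi; rewrite picard_diff_0.
    apply (abs_RInt_F_le (fun j _ => y0 j) l r); auto.
    + intros j Hj t Ht; apply continuous_const.
    + intros t Ht; rewrite pow_O, Rmult_1_r; apply Rle_refl.
  - assert (Hf : INR (fact (S k)) <> 0) by apply INR_fact_neq_0.
    replace (norm1 n y0 * (INR n * K) ^ S (S k) * Rabs (x - 1) ^ S (S k) / INR (fact (S (S k))))
      with (INR n * (K * (norm1 n y0 * (INR n * K) ^ S k / INR (fact (S k)))
                     * Rabs (x - 1) ^ S (S k) / INR (S (S k))))
      by (change (fact (S (S k))) with (S (S k) * fact (S k))%nat; rewrite mult_INR;
          simpl pow; field; split; first [exact Hf | apply not_0_INR; lia]).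
    apply norm1_le; intros i Hi; rewrite picard_diff_S by (auto; lra).
    apply abs_RInt_F_le with (l := l) (r := r); auto.
    + intros j Hj t Ht; apply continuous_Rminus; apply picard_cont; auto.
    + intros t Ht; eapply Rle_trans; [apply IH; auto | right; field; exact Hf].
Qed.

Lemma picard_unif_cvg l r : 0 < l -> l <= 1 -> 1 <= r ->
  forall eps, 0 < eps -> exists N, forall k i x, (N <= k)%nat -> (i < n)%nat -> l <= x <= r ->
    Rabs (picard_lim i x - picard k i x) < eps.
Proof.
  intros Hl Hl1 Hr eps He.
  destruct (continuous_bounded_on L l r ltac:(lra) (fun t Ht => L_cont t ltac:(lra))) as [K HK].
  assert (HK0 : 0 <= K) by (generalize (L_nonneg l) (HK l ltac:(lra)); lra).
  set (q := INR n * K * (r - l)).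
  assert (Hq : 0 <= q) by (unfold q; generalize (pos_INR n); intros; apply Rmult_le_pos; nra).
  destruct (pow_fact_halving q (norm1 n y0) Hq (norm1_ge_0 n y0)) as [N0 HN0].
  set (cc := fun k => norm1 n y0 * q ^ S k / INR (fact (S k))).
  assert (Hcc : forall k, 0 <= cc k).
  { intros k; unfold cc; apply Rmult_le_pos;
      [apply Rmult_le_pos; [apply norm1_ge_0 | apply pow_le; auto] |
       apply Rlt_le, Rinv_0_lt_compat, lt_0_INR, lt_O_fact]. }
  destruct (halving_eventually_lt cc N0 Hcc HN0 (eps / 2)) as [N [HN Hsmall]]; [lra |].
  exists N; intros k i x Hk Hi Hx.
  apply Rle_lt_trans with (2 * cc k); [| generalize (Hsmall k Hk); lra].
  apply (Lim_seq_dist_le_halving (fun k => picard k i x) cc N0); auto; [| lia].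
  intros m _; eapply Rle_trans; [apply (Rabs_le_norm1 n (fun i => picard_diff m i x)); auto |].
  eapply Rle_trans; [apply (picard_diff_bound l r K); auto |].
  unfold cc, Rdiv; apply Rmult_le_compat_r;
    [apply Rlt_le, Rinv_0_lt_compat, lt_0_INR, lt_O_fact |].
  rewrite Rmult_assoc, <- Rpow_mult_distr; apply Rmult_le_compat_l; [apply norm1_ge_0 |].
  apply pow_incr; split; [apply Rmult_le_pos; [apply Rmult_le_pos; auto using pos_INR | apply Rabs_pos] |].
  unfold q; apply Rmult_le_compat_l; [apply Rmult_le_pos; auto using pos_INR |].
  unfold Rabs; destruct (Rcase_abs (x - 1)); lra.
Qed.

Lemma picard_lim_cont i x : (i < n)%nat -> 0 < x -> continuous (picard_lim i) x.
Proof.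
  intros Hi Hx; destruct (interval_around x Hx) as (l & r & Hl & Hl1 & Hr & Hlr).
  apply filterlim_locally; intros eps.
  destruct (picard_unif_cvg l r Hl Hl1 Hr (eps / 3)) as [N HN]; [generalize (cond_pos eps); lra |].
  assert (Hp := picard_cont N i x Hi Hx).
  apply filterlim_locally with (eps := mkposreal (eps / 3) ltac:(generalize (cond_pos eps); lra)) in Hp.
  generalize (filter_and _ _ Hp (locally_in_interval l r x Hlr)); apply filter_imp.
  intros y [Hy Hyr]; change (Rabs (picard_lim i y - picard_lim i x) < eps).
  change (Rabs (picard N i y - picard N i x) < eps / 3) in Hy.
  generalize (HN N i y (le_n N) Hi Hyr) (HN N i x (le_n N) Hi ltac:(lra)); intros Hy' Hx'.
  replace (picard_lim i y - picard_lim i x) with ((picard_lim i y - picard N i y)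
    + (picard N i y - picard N i x) - (picard_lim i x - picard N i x)) by ring.
  eapply Rle_lt_trans; [apply Rabs_triang |]; rewrite Rabs_Ropp.
  eapply Rle_lt_trans; [apply Rplus_le_compat_r, Rabs_triang | lra].
Qed.

Lemma picard_lim_integral i x : (i < n)%nat -> 0 < x ->
  picard_lim i x = y0 i + RInt (fun t => F t (fun j => picard_lim j t) i) 1 x.
Proof.
  intros Hi Hx; destruct (interval_around x Hx) as (l & r & Hl & Hl1 & Hr & Hlr).
  destruct (continuous_bounded_on L l r ltac:(lra) (fun t Ht => L_cont t ltac:(lra))) as [K HK].
  assert (HK0 : 0 <= K) by (generalize (L_nonneg l) (HK l ltac:(lra)); lra).
  assert (HnK : 0 <= INR n * K * (r - l))
    by (generalize (pos_INR n); intros; apply Rmult_le_pos; [apply Rmult_le_pos|]; lra).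
  apply eq_of_Rabs_lt_all; intros eps He.
  set (d := eps / (1 + INR n * K * (r - l))).
  assert (Hd : 0 < d) by (apply Rdiv_lt_0_compat; lra).
  destruct (picard_unif_cvg l r Hl Hl1 Hr d Hd) as [N HN].
  assert (Hdiff : Rabs (RInt (fun t => F t (fun j => picard N j t - picard_lim j t) i) 1 x)
                  <= K * (INR n * d) * Rabs (x - 1) ^ 1 / INR 1).
  { apply (abs_RInt_F_le _ l r); auto; [lra | |].
    - intros j Hj t Ht; apply continuous_Rminus; [apply picard_cont | apply picard_lim_cont]; auto.
    - intros t Ht; rewrite pow_O, Rmult_1_r; apply norm1_le; intros j Hj.
      rewrite Rabs_minus_sym; apply Rlt_le, HN; auto. }
  rewrite <- RInt_F_minus in Hdiff by
    (auto; intros j Hj t Ht; first [apply picard_cont | apply picard_lim_cont]; auto).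
  rewrite pow_1, Rdiv_1_r in Hdiff.
  assert (Hx1 : Rabs (x - 1) <= r - l) by (unfold Rabs; destruct (Rcase_abs (x - 1)); lra).
  assert (Hlast := HN (S N) i x (le_S _ _ (le_n N)) Hi ltac:(lra)); rewrite picard_S in Hlast.
  replace (picard_lim i x - (y0 i + RInt (fun t => F t (fun j => picard_lim j t) i) 1 x))
    with ((picard_lim i x - (y0 i + RInt (fun t => F t (fun j => picard N j t) i) 1 x))
          + (RInt (fun t => F t (fun j => picard N j t) i) 1 x
             - RInt (fun t => F t (fun j => picard_lim j t) i) 1 x)) by ring.
  eapply Rle_lt_trans; [apply Rabs_triang |].
  assert (K * (INR n * d) * Rabs (x - 1) <= d * (INR n * K * (r - l))).
  { replace (K * (INR n * d) * Rabs (x - 1)) with (d * (INR n * K) * Rabs (x - 1)) by ring.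
    replace (d * (INR n * K * (r - l))) with (d * (INR n * K) * (r - l)) by ring.
    apply Rmult_le_compat_l; auto.
    apply Rmult_le_pos; [lra | apply Rmult_le_pos; auto using pos_INR]. }
  assert (d * (1 + INR n * K * (r - l)) = eps) by (unfold d; field; lra).
  nra.
Qed.

Lemma linear_system_solution : exists (Y : nat -> R -> R),
  (forall i, (i < n)%nat -> Y i 1 = y0 i) /\
  forall i x, (i < n)%nat -> 0 < x -> is_derive (Y i) x (F x (fun j => Y j x) i).
Proof.
  exists picard_lim; split.
  - intros i Hi; rewrite picard_lim_integral, RInt_point by (auto; lra).
    change (y0 i + 0 = y0 i); ring.
  - intros i x Hi Hx.
    apply is_derive_ext_loc with (f := fun y => y0 i + RInt (fun t => F t (fun j => picard_lim j t) i) 1 y).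
    { generalize (locally_pos x Hx); apply filter_imp; intros y Hy.
      symmetry; apply picard_lim_integral; auto. }
    rewrite <- (Rplus_0_l (F x _ i)).
    apply (is_derive_plus (fun _ => y0 i));
      [apply (is_derive_const (K := R_AbsRing) (V := R_NormedModule)) |].
    apply is_derive_RInt_pos; auto; intros t Ht; apply F_cont; auto.
    intros j Hj; apply picard_lim_cont; auto.
Qed.

End LinearSystem.

(** * The Liouville transformation *)

Definition schrodinger_potential (b kappa : R -> R) (x : R) : R :=
  b x ^ 2 + Derive b x + 2 * kappa x.

(* [psi = p + i q] solves [psi'' = (a + i c) psi], with [P = p'] and [Q = q']. *)
Definition schrodinger_sol (a : R -> R) (c : R) (p P q Q : R -> R) : Prop :=
  forall x, 0 < x ->
    is_derive p x (P x) /\ is_derive P x (a x * p x - c * q x) /\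
    is_derive q x (Q x) /\ is_derive Q x (a x * q x + c * p x).

Lemma Lstar_exp_mul (b kappa B p P P' : R -> R) x : 0 < x ->
  (forall y, 0 < y -> ex_derive b y) -> (forall y, 0 < y -> is_derive B y (b y)) ->
  (forall y, 0 < y -> is_derive p y (P y)) -> (forall y, 0 < y -> is_derive P y (P' y)) ->
  ex_derive (fun y => 2 * exp (B y) * p y) x /\
  ex_derive (Derive (fun y => 2 * exp (B y) * p y)) x /\
  Lstar b kappa (fun y => 2 * exp (B y) * p y) x
  = exp (B x) * (P' x - schrodinger_potential b kappa x * p x).
Proof.
  intros Hx Hb HB Hp HP.
  set (phi := fun y => 2 * exp (B y) * p y).
  assert (D1 : forall y, 0 < y -> is_derive phi y (2 * exp (B y) * (b y * p y + P y))).
  { intros y Hy; assert (E1 := HB y Hy); assert (E2 := Hp y Hy).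
    unfold phi; auto_derive; [ex_derive_hyps | rewrite_derive_hyps; ring]. }
  assert (DD : locally x (fun y => Derive phi y = 2 * exp (B y) * (b y * p y + P y))).
  { generalize (locally_pos x Hx); apply filter_imp; intros y Hy; now apply is_derive_unique, D1. }
  assert (D2 : is_derive (fun y => 2 * exp (B y) * (b y * p y + P y)) x
     (2 * exp (B x) * (b x * (b x * p x + P x) + Derive b x * p x + b x * P x + P' x))).
  { assert (E1 := HB x Hx); assert (E2 := Hp x Hx); assert (E3 := HP x Hx);
    assert (E4 := Derive_correct _ _ (Hb x Hx)).
    auto_derive; [ex_derive_hyps | rewrite_derive_hyps; ring]. }
  assert (D3 : is_derive (fun y => b y * phi y) x
     (Derive b x * phi x + b x * (2 * exp (B x) * (b x * p x + P x)))).
  { apply (is_derive_mult b phi); [apply Derive_correct, Hb | apply D1 |]; auto.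
    intros; apply Rmult_comm. }
  split; [|split].
  - eexists; apply D1; auto.
  - eexists; eapply is_derive_ext_loc; [| apply D2].
    generalize DD; apply filter_imp; intros y Hy; auto.
  - assert (E2 : Derive (Derive phi) x
                 = 2 * exp (B x) * (b x * (b x * p x + P x) + Derive b x * p x + b x * P x + P' x))
      by (rewrite (Derive_ext_loc _ _ _ DD); apply is_derive_unique, D2).
    assert (E3 : Derive (fun y => b y * phi y) x
                 = Derive b x * phi x + b x * (2 * exp (B x) * (b x * p x + P x)))
      by (apply is_derive_unique, D3).
    unfold Lstar; rewrite E2, E3.
    unfold phi, schrodinger_potential; field.
Qed.

Lemma is_derive_RInt_b (b : R -> R) : (forall x, 0 < x -> ex_derive b x) ->
  forall x, 0 < x -> is_derive (fun y => RInt b 1 y) x (b x).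
Proof.
  intros Hb x Hx; apply is_derive_RInt_pos; auto.
  intros t Ht; apply (ex_derive_continuous (K := R_AbsRing) (V := R_NormedModule)); auto.
Qed.

Lemma eigensol_of_schrodinger_sol b kappa al be p P q Q : (forall x, 0 < x -> ex_derive b x) ->
  schrodinger_sol (fun x => schrodinger_potential b kappa x + 2 * al) (2 * be) p P q Q ->
  is_eigensol b kappa al be
    (fun x => 2 * exp (RInt b 1 x) * p x) (fun x => 2 * exp (RInt b 1 x) * q x).
Proof.
  intros Hb S.
  assert (HB := is_derive_RInt_b b Hb).
  assert (Cp := fun x Hx => Lstar_exp_mul b kappa _ p P _ x Hx Hb HB
                  (fun y Hy => proj1 (S y Hy)) (fun y Hy => proj1 (proj2 (S y Hy)))).
  assert (Cq := fun x Hx => Lstar_exp_mul b kappa _ q Q _ x Hx Hb HB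
                  (fun y Hy => proj1 (proj2 (proj2 (S y Hy))))
                  (fun y Hy => proj2 (proj2 (proj2 (S y Hy))))).
  split; [|split].
  - intros x Hx; destruct (Cp x Hx) as [H1 [H2 _]]; auto.
  - intros x Hx; destruct (Cq x Hx) as [H1 [H2 _]]; auto.
  - intros x Hx; destruct (Cp x Hx) as [_ [_ ->]]; destruct (Cq x Hx) as [_ [_ ->]].
    split; ring.
Qed.

Definition sq_integrable (p q : R -> R) : Prop :=
  ex_RInt_gen (fun x => p x ^ 2 + q x ^ 2) (at_point 1) (Rbar_locally p_infty).

Lemma sq_integrable_of_L2_near_infty b p q :
  L2_near_infty b (fun x => 2 * exp (RInt b 1 x) * p x) (fun x => 2 * exp (RInt b 1 x) * q x) ->
  sq_integrable p q.
Proof.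
  intros [l Hl].
  apply (ex_RInt_gen_ext_eq (fun x => / 4 * (((2 * exp (RInt b 1 x) * p x) ^ 2
           + (2 * exp (RInt b 1 x) * q x) ^ 2) * scale_dens b x))).
  - intros x; as_R_eq; unfold scale_dens.
    replace (- 2 * RInt b 1 x) with (- (RInt b 1 x + RInt b 1 x)) by ring.
    rewrite exp_Ropp, exp_plus; field; apply exp_neq_0.
  - exists (scal (/ 4) l); exact (is_RInt_gen_scal _ (/ 4) l Hl).
Qed.

Lemma RInt_cvg_of_ex_RInt_gen (f : R -> R) : ex_RInt_gen f (at_point 1) (Rbar_locally p_infty) ->
  exists l, forall eps, 0 < eps -> exists M, forall X, M < X -> Rabs (RInt f 1 X - l) < eps.
Proof.
  intros [l Hl]; exists l; intros eps He.
  destruct (Hl (fun y => Rabs (y - l) < eps) (ltac:(now exists (mkposreal eps He))))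
    as [Q Rr HQ [M HM] HQR].
  exists M; intros X HX; destruct (HQR 1 X HQ (HM X HX)) as [y [Hy1 Hy2]].
  simpl in Hy1; now rewrite (is_RInt_unique _ _ _ _ Hy1).
Qed.

Section ImproperIntegral.

Variable f : R -> R.
Hypothesis f_int : ex_RInt_gen f (at_point 1) (Rbar_locally p_infty).
Hypothesis f_cont : cont_on_pos f.
Hypothesis f_nonneg : forall t, 0 < t -> 0 <= f t.

Lemma RInt_bounded_of_ex_RInt_gen : exists l, forall a X, 1 <= a -> a <= X -> RInt f a X <= l.
Proof.
  destruct (RInt_cvg_of_ex_RInt_gen f f_int) as [l Hl]; exists l; intros a X Ha HX.
  apply Rle_trans with (RInt f 1 X); [apply RInt_nonneg_mono_l; auto; lra |].
  apply Rnot_lt_le; intros Hlt.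
  destruct (Hl (RInt f 1 X - l) ltac:(lra)) as [M HM].
  specialize (HM (Rmax M X + 1) ltac:(generalize (Rmax_l M X); lra)).
  generalize (RInt_nonneg_mono_r f 1 X (Rmax M X + 1) ltac:(lra) ltac:(lra)
                ltac:(generalize (Rmax_r M X); lra) f_cont f_nonneg).
  unfold Rabs in HM; destruct (Rcase_abs _) in HM; lra.
Qed.

Lemma RInt_tail_small_of_ex_RInt_gen :
  forall eps, 0 < eps -> exists a, 1 <= a /\ forall X, a <= X -> RInt f a X <= eps.
Proof.
  intros eps He; destruct (RInt_cvg_of_ex_RInt_gen f f_int) as [l Hl].
  destruct (Hl (eps / 2) ltac:(lra)) as [M HM].
  exists (Rmax 1 M + 1); split; [generalize (Rmax_l 1 M); lra |]; intros X HX.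
  assert (HaM : M < Rmax 1 M + 1) by (generalize (Rmax_r 1 M); lra).
  generalize (HM _ HaM) (HM X ltac:(lra)).
  rewrite (RInt_Chasles_pos f 1 (Rmax 1 M + 1) X) by (auto; generalize (Rmax_l 1 M); lra).
  intros H1 H2; generalize (Rle_abs (- (RInt f 1 (Rmax 1 M + 1) - l)))
    (Rle_abs (RInt f 1 (Rmax 1 M + 1) + RInt f (Rmax 1 M + 1) X - l)); rewrite Rabs_Ropp; lra.
Qed.

End ImproperIntegral.

(** * Solutions of the Schrodinger system *)

Definition schrodinger_field (a : R -> R) (c t : R) (y : nat -> R) (i : nat) : R :=
  match i with
  | 0%nat => y 1%nat
  | 1%nat => a t * y 0%nat - c * y 2%nat
  | 2%nat => y 3%nat
  | _ => a t * y 2%nat + c * y 0%nat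
  end.

Lemma schrodinger_sol_exists a c p0 P0 q0 Q0 : cont_on_pos a ->
  exists p P q Q, schrodinger_sol a c p P q Q /\ p 1 = p0 /\ P 1 = P0 /\ q 1 = q0 /\ Q 1 = Q0.
Proof.
  intros Ha.
  set (y0 := fun i => match i with 0%nat => p0 | 1%nat => P0 | 2%nat => q0 | _ => Q0 end).
  destruct (linear_system_solution 4 (schrodinger_field a c) (fun t => Rabs (a t) + Rabs c + 1))
    with (y0 := y0) as [Y [Hinit Hder]].
  - intros t y z [|[|[|i]]]; simpl; ring.
  - intros t y i Hi; simpl; rewrite Rplus_0_l.
    generalize (Rabs_pos (y 0%nat)) (Rabs_pos (y 1%nat)) (Rabs_pos (y 2%nat)) (Rabs_pos (y 3%nat))
      (Rabs_pos (a t)) (Rabs_pos c); intros.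
    destruct i as [|[|[|[|i]]]]; try lia; simpl;
      repeat (eapply Rle_trans; [apply Rabs_triang |]); rewrite ?Rabs_Ropp, ?Rabs_mult; nra.
  - intros t; generalize (Rabs_pos (a t)) (Rabs_pos c); lra.
  - solve_cont_on_pos.
  - intros Y' i t Hi Ht HY; assert (Hat := Ha t Ht).
    destruct i as [|[|[|[|i]]]]; try lia; unfold schrodinger_field; solve_continuous; apply HY; lia.
  - exists (Y 0%nat), (Y 1%nat), (Y 2%nat), (Y 3%nat); split.
    + intros x Hx; split; [|split; [|split]]; apply Hder; auto.
    + split; [|split; [|split]]; apply Hinit; lia.
Qed.

Lemma schrodinger_sol_cont a c p P q Q : schrodinger_sol a c p P q Q ->
  cont_on_pos p /\ cont_on_pos P /\ cont_on_pos q /\ cont_on_pos Q.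
Proof.
  intros S; repeat split; intros x Hx; destruct (S x Hx) as (? & ? & ? & ?);
    eapply is_derive_continuous_R; eauto.
Qed.

(* The real part of [psi1 psi2' - psi1' psi2]. *)
Definition wronskian (p1 P1 q1 Q1 p2 P2 q2 Q2 : R -> R) (x : R) : R :=
  p1 x * P2 x - q1 x * Q2 x - P1 x * p2 x + Q1 x * q2 x.

Lemma wronskian_const a c p1 P1 q1 Q1 p2 P2 q2 Q2 :
  schrodinger_sol a c p1 P1 q1 Q1 -> schrodinger_sol a c p2 P2 q2 Q2 ->
  forall X, 1 <= X -> wronskian p1 P1 q1 Q1 p2 P2 q2 Q2 X = wronskian p1 P1 q1 Q1 p2 P2 q2 Q2 1.
Proof.
  intros S1 S2; apply derive_zero_const_pos; intros x Hx.
  destruct (S1 x Hx) as (? & ? & ? & ?); destruct (S2 x Hx) as (? & ? & ? & ?).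
  unfold wronskian; auto_derive; [ex_derive_hyps | rewrite_derive_hyps; ring].
Qed.

Lemma schrodinger_fundamental_pair a c : cont_on_pos a ->
  exists p1 P1 q1 Q1 p2 P2 q2 Q2,
    schrodinger_sol a c p1 P1 q1 Q1 /\ schrodinger_sol a c p2 P2 q2 Q2 /\
    forall x, 1 <= x -> wronskian p1 P1 q1 Q1 p2 P2 q2 Q2 x = 1.
Proof.
  intros Ha.
  destruct (schrodinger_sol_exists a c 1 0 0 0 Ha) as (p1 & P1 & q1 & Q1 & S1 & I1).
  destruct (schrodinger_sol_exists a c 0 1 0 0 Ha) as (p2 & P2 & q2 & Q2 & S2 & I2).
  exists p1, P1, q1, Q1, p2, P2, q2, Q2; split; [exact S1 | split; [exact S2 |]].
  intros x Hx; rewrite (wronskian_const a c) by auto; unfold wronskian.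
  destruct I1 as (-> & -> & -> & ->); destruct I2 as (-> & -> & -> & ->); ring.
Qed.

(** * Potentials bounded below by [- C x^2] *)

Lemma energy_ineq (x K0 a p P q Q : R) : 1 <= x -> - K0 * x ^ 2 <= a ->
  / 2 * ((P ^ 2 + Q ^ 2) / x ^ 2)
  <= (P ^ 2 + Q ^ 2 + a * (p ^ 2 + q ^ 2)) / x ^ 2 - 2 * (p * P + q * Q) / x ^ 3
     + (K0 + 2) * (p ^ 2 + q ^ 2).
Proof.
  intros Hx Ha.
  set (y := / x); assert (Hy : 0 < y) by (apply Rinv_0_lt_compat; lra).
  assert (Hy1 : y <= 1) by (unfold y; rewrite <- Rinv_1; apply Rinv_le_contravar; lra).
  assert (Hxy : x * y = 1) by (unfold y; field; lra).
  assert (Hg : 0 <= p ^ 2 + q ^ 2) by nra.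
  assert (Hay : - K0 * (p ^ 2 + q ^ 2) <= a * y ^ 2 * (p ^ 2 + q ^ 2)).
  { apply Rmult_le_compat_r; auto.
    assert (Hxy2 : x ^ 2 * y ^ 2 = 1) by (rewrite <- Rpow_mult_distr, Hxy; ring).
    replace (- K0) with (- K0 * x ^ 2 * y ^ 2) by (rewrite Rmult_assoc, Hxy2; ring).
    apply Rmult_le_compat_r; [nra | auto]. }
  assert (Hy4 : (p ^ 2 + q ^ 2) * y ^ 4 <= p ^ 2 + q ^ 2).
  { rewrite <- (Rmult_1_r (p ^ 2 + q ^ 2)) at 2; apply Rmult_le_compat_l; auto.
    rewrite <- (pow1 4); apply pow_incr; lra. }
  (* AM-GM: [2 (p P + q Q) / x^3 <= (P^2 + Q^2) / (2 x^2) + 2 (p^2 + q^2) / x^4]. *)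
  assert (SOS : 0 <= y ^ 2 * ((P - 2 * p * y) ^ 2 + (Q - 2 * q * y) ^ 2)) by
    (apply Rmult_le_pos; [apply pow2_ge_0 | apply Rplus_le_le_0_compat; apply pow2_ge_0]).
  replace ((P ^ 2 + Q ^ 2) / x ^ 2) with ((P ^ 2 + Q ^ 2) * y ^ 2) by (unfold y; field; lra).
  replace ((P ^ 2 + Q ^ 2 + a * (p ^ 2 + q ^ 2)) / x ^ 2)
    with ((P ^ 2 + Q ^ 2) * y ^ 2 + a * y ^ 2 * (p ^ 2 + q ^ 2)) by (unfold y; field; lra).
  replace (2 * (p * P + q * Q) / x ^ 3) with (2 * (p * P + q * Q) * y ^ 3) by (unfold y; field; lra).
  nra.
Qed.

Lemma RInt_sq_norm_grows p P q Q X0 : 0 < X0 ->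
  (forall x, 0 < x -> is_derive p x (P x)) -> (forall x, 0 < x -> is_derive q x (Q x)) ->
  cont_on_pos p -> cont_on_pos P -> cont_on_pos q -> cont_on_pos Q ->
  (forall x, X0 <= x -> 1 <= p x * P x + q x * Q x) ->
  forall Y, X0 + 1 <= Y -> 2 * (Y - (X0 + 1)) <= RInt (fun x => p x ^ 2 + q x ^ 2) (X0 + 1) Y.
Proof.
  intros HX0 Dp Dq Cp CP Cq CQ Hgrow Y HY.
  assert (Hg2 : forall t, X0 + 1 <= t -> 2 <= p t ^ 2 + q t ^ 2).
  { intros t Ht.
    assert (E : RInt (fun x => 2 * (p x * P x + q x * Q x)) X0 t
                = (p t ^ 2 + q t ^ 2) - (p X0 ^ 2 + q X0 ^ 2)).
    { apply (RInt_derive_pos (fun x => p x ^ 2 + q x ^ 2)); try lra.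
      - intros x Hx; assert (Ep := Dp x Hx); assert (Eq := Dq x Hx).
        auto_derive; [ex_derive_hyps | rewrite_derive_hyps; ring].
      - solve_cont_on_pos. }
    assert (2 * (t - X0) <= RInt (fun x => 2 * (p x * P x + q x * Q x)) X0 t).
    { rewrite <- RInt_const_R; apply RInt_le_pos; try lra.
      - intros x Hx; apply continuous_const.
      - solve_cont_on_pos.
      - intros x Hx; generalize (Hgrow x ltac:(lra)); lra. }
    nra. }
  rewrite <- RInt_const_R; apply RInt_le_pos; try lra.
  - intros x Hx; apply continuous_const.
  - solve_cont_on_pos.
  - intros t Ht; apply Hg2; lra.
Qed.

Section EnergyEstimate.

Variables (a : R -> R) (c K0 a0 : R) (p P q Q : R -> R).
Hypotheses (Ha0 : 1 <= a0) (HK0 : 0 <= K0) (a_cont : cont_on_pos a).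
Hypothesis a_lower : forall x, a0 <= x -> - K0 * x ^ 2 <= a x.
Hypothesis S : schrodinger_sol a c p P q Q.

(* Integrate [energy_ineq], whose middle term is the derivative of [Re (conj psi psi') / x^2]. *)
Lemma RInt_energy_le X : a0 <= X ->
  / 2 * RInt (fun x => (P x ^ 2 + Q x ^ 2) / x ^ 2) a0 X
  <= (p X * P X + q X * Q X) / X ^ 2 - (p a0 * P a0 + q a0 * Q a0) / a0 ^ 2
     + (K0 + 2) * RInt (fun x => p x ^ 2 + q x ^ 2) a0 X.
Proof.
  intros HX; destruct (schrodinger_sol_cont a c p P q Q S) as (Cp & CP & Cq & CQ).
  set (dH := fun x => (P x ^ 2 + Q x ^ 2 + a x * (p x ^ 2 + q x ^ 2)) / x ^ 2
                      - 2 * (p x * P x + q x * Q x) / x ^ 3).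
  assert (DH : forall x, 0 < x -> is_derive (fun x => (p x * P x + q x * Q x) / x ^ 2) x (dH x)).
  { intros x Hx; destruct (S x Hx) as (? & ? & ? & ?); unfold dH.
    auto_derive; [ex_derive_hyps; apply Rgt_not_eq; nra | rewrite_derive_hyps; field; lra]. }
  rewrite <- RInt_scal_pos by (auto; try lra; solve_cont_on_pos).
  eapply Rle_trans; [apply (RInt_le_pos _ (fun x => dH x + (K0 + 2) * (p x ^ 2 + q x ^ 2))); try lra |].
  - solve_cont_on_pos.
  - unfold dH; solve_cont_on_pos.
  - intros x Hx; apply energy_ineq; [| apply a_lower]; lra.
  - rewrite RInt_plus_pos, RInt_scal_pos, (RInt_derive_pos _ dH) by
      (auto; try lra; unfold dH; solve_cont_on_pos).
    apply Rle_refl.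
Qed.

(* A large [int |psi'|^2 / x^2] would force [Re (conj psi psi') >= 1], hence linear growth
   of [|psi|^2]. *)
Lemma RInt_deriv_sq_div_sq_bounded l :
  (forall X, a0 <= X -> RInt (fun x => p x ^ 2 + q x ^ 2) a0 X <= l) ->
  exists T, forall X, a0 <= X -> RInt (fun x => (P x ^ 2 + Q x ^ 2) / x ^ 2) a0 X <= T.
Proof.
  intros Hl; destruct (schrodinger_sol_cont a c p P q Q S) as (Cp & CP & Cq & CQ).
  set (g := fun x => p x ^ 2 + q x ^ 2); set (E := fun x => (P x ^ 2 + Q x ^ 2) / x ^ 2).
  assert (Cg : cont_on_pos g) by (unfold g; solve_cont_on_pos).
  assert (CE : cont_on_pos E) by (unfold E; solve_cont_on_pos).
  assert (Hl0 : 0 <= l) by (generalize (Hl a0 (Rle_refl _)); rewrite RInt_point; unfold zero; simpl; lra).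
  set (H0 := (p a0 * P a0 + q a0 * Q a0) / a0 ^ 2).
  exists (2 * (Rabs H0 + (K0 + 2) * l + 1)); intros X0 HX0; apply Rnot_lt_le; intros Hbig.
  assert (Hgrow : forall x, X0 <= x -> 1 <= p x * P x + q x * Q x).
  { intros x Hx.
    assert (HE : 0 <= RInt E X0 x)
      by (apply RInt_ge_0_pos; auto; try lra; intros t Ht; unfold E;
          apply Rmult_le_pos; [nra | apply Rlt_le, Rinv_0_lt_compat, pow_lt; lra]).
    assert (Hx2 : 1 <= x ^ 2) by (rewrite <- (pow1 2); apply pow_incr; lra).
    generalize (RInt_energy_le x ltac:(lra)) (Hl x ltac:(lra)) (Rle_abs (- H0)); fold g E H0.
    rewrite Rabs_Ropp, (RInt_Chasles_pos E a0 X0 x) by (auto; lra); intros.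
    assert (Hx1 : 1 < (p x * P x + q x * Q x) / x ^ 2) by nra.
    apply (Rmult_lt_compat_r (x ^ 2)) in Hx1; [| lra].
    unfold Rdiv in Hx1; rewrite Rmult_assoc, Rinv_l in Hx1 by lra; lra. }
  assert (Hg := RInt_sq_norm_grows p P q Q X0 ltac:(lra) (fun x Hx => proj1 (S x Hx))
                  (fun x Hx => proj1 (proj2 (proj2 (S x Hx)))) Cp CP Cq CQ Hgrow (X0 + 2 + l) ltac:(lra)).
  generalize (Hl (X0 + 2 + l) ltac:(lra)); fold g; fold g in Hg.
  rewrite (RInt_Chasles_pos g a0 (X0 + 1) (X0 + 2 + l)) by (auto; lra).
  assert (0 <= RInt g a0 (X0 + 1)) by (apply RInt_ge_0_pos; auto; try lra; intros; unfold g; nra).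
  lra.
Qed.

End EnergyEstimate.

Lemma Rinv_le_of_wronskian x p1 P1 q1 Q1 p2 P2 q2 Q2 : 0 < x ->
  p1 * P2 - q1 * Q2 - P1 * p2 + Q1 * q2 = 1 ->
  / x <= / 2 * ((p1 ^ 2 + q1 ^ 2) + (p2 ^ 2 + q2 ^ 2))
         + / 2 * ((P1 ^ 2 + Q1 ^ 2) / x ^ 2 + (P2 ^ 2 + Q2 ^ 2) / x ^ 2).
Proof.
  intros Hx W; set (y := / x).
  replace ((P1 ^ 2 + Q1 ^ 2) / x ^ 2) with ((P1 ^ 2 + Q1 ^ 2) * y ^ 2) by (unfold y; field; lra).
  replace ((P2 ^ 2 + Q2 ^ 2) / x ^ 2) with ((P2 ^ 2 + Q2 ^ 2) * y ^ 2) by (unfold y; field; lra).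
  assert (SOS : 0 <= (p1 - P2 * y) ^ 2 + (q1 + Q2 * y) ^ 2 + (p2 + P1 * y) ^ 2 + (q2 - Q1 * y) ^ 2)
    by (repeat apply Rplus_le_le_0_compat; apply pow2_ge_0).
  replace y with (y * 1) at 1 by ring; rewrite <- W; nra.
Qed.

Section PotentialBoundedBelow.

Variables (a : R -> R) (c : R) (p1 P1 q1 Q1 p2 P2 q2 Q2 : R -> R).
Hypothesis a_cont : cont_on_pos a.
Hypotheses (S1 : schrodinger_sol a c p1 P1 q1 Q1) (S2 : schrodinger_sol a c p2 P2 q2 Q2).
Hypothesis W1 : forall x, 1 <= x -> wronskian p1 P1 q1 Q1 p2 P2 q2 Q2 x = 1.

Lemma sq_integrable_sol_bounds a0 C p P q Q : 1 <= a0 -> (forall x, a0 <= x -> C * x ^ 2 <= a x) ->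
  schrodinger_sol a c p P q Q -> sq_integrable p q ->
  exists l T, forall X, a0 <= X -> RInt (fun x => p x ^ 2 + q x ^ 2) a0 X <= l /\
                                    RInt (fun x => (P x ^ 2 + Q x ^ 2) / x ^ 2) a0 X <= T.
Proof.
  intros Ha0 Hlow S L2.
  destruct (schrodinger_sol_cont a c p P q Q S) as (Cp & _ & Cq & _).
  destruct (RInt_bounded_of_ex_RInt_gen (fun x => p x ^ 2 + q x ^ 2) L2) as [l Hl].
  - solve_cont_on_pos.
  - intros t _; nra.
  - assert (Hlow' : forall x, a0 <= x -> - Rabs C * x ^ 2 <= a x).
    { intros x Hx; eapply Rle_trans; [| apply Hlow; auto].
      apply Rmult_le_compat_r; [apply pow2_ge_0 |].
      generalize (Rle_abs (- C)); rewrite Rabs_Ropp; lra. }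
    destruct (RInt_deriv_sq_div_sq_bounded a c (Rabs C) a0 p P q Q Ha0 (Rabs_pos C) a_cont Hlow' S l)
      as [T HT]; [intros; apply Hl; lra |].
    exists l, T; auto.
Qed.

(* Integrate [Rinv_le_of_wronskian]: its right side is integrable, [1/x] is not. *)
Lemma not_sq_integrable_pair_of_lower_bound C z0 :
  (forall x, z0 < x -> C * x ^ 2 <= a x) -> sq_integrable p1 q1 -> sq_integrable p2 q2 -> False.
Proof.
  intros Hlow L1 L2.
  set (a0 := Rmax 1 (z0 + 1)).
  assert (Ha0 : 1 <= a0) by apply Rmax_l.
  assert (Hlow' : forall x, a0 <= x -> C * x ^ 2 <= a x)
    by (intros x Hx; apply Hlow; generalize (Rmax_r 1 (z0 + 1)); unfold a0 in Hx; lra).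
  destruct (sq_integrable_sol_bounds a0 C p1 P1 q1 Q1 Ha0 Hlow' S1 L1) as (l1 & T1 & B1).
  destruct (sq_integrable_sol_bounds a0 C p2 P2 q2 Q2 Ha0 Hlow' S2 L2) as (l2 & T2 & B2).
  destruct (schrodinger_sol_cont a c p1 P1 q1 Q1 S1) as (Cp1 & CP1 & Cq1 & CQ1).
  destruct (schrodinger_sol_cont a c p2 P2 q2 Q2 S2) as (Cp2 & CP2 & Cq2 & CQ2).
  set (g1 := fun x => p1 x ^ 2 + q1 x ^ 2); set (g2 := fun x => p2 x ^ 2 + q2 x ^ 2).
  set (E1 := fun x => (P1 x ^ 2 + Q1 x ^ 2) / x ^ 2); set (E2 := fun x => (P2 x ^ 2 + Q2 x ^ 2) / x ^ 2).
  assert (Cg1 : cont_on_pos g1) by (unfold g1; solve_cont_on_pos).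
  assert (Cg2 : cont_on_pos g2) by (unfold g2; solve_cont_on_pos).
  assert (CE1 : cont_on_pos E1) by (unfold E1; solve_cont_on_pos).
  assert (CE2 : cont_on_pos E2) by (unfold E2; solve_cont_on_pos).
  destruct (RInt_Rinv_unbounded a0 (/ 2 * (l1 + l2) + / 2 * (T1 + T2))) as (X & HX & Hbig); [lra |].
  assert (Hint : RInt (fun x => / x) a0 X
                 <= RInt (fun x => / 2 * (g1 x + g2 x) + / 2 * (E1 x + E2 x)) a0 X).
  { apply RInt_le_pos; try lra.
    - intros t Ht; solve_continuous.
    - solve_cont_on_pos.
    - intros x Hx; apply Rinv_le_of_wronskian; [lra | apply W1; lra]. }
  rewrite RInt_plus_pos, !RInt_scal_pos, !RInt_plus_pos in Hint by (try lra; solve_cont_on_pos).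
  destruct (B1 X HX) as [Hg1 HE1], (B2 X HX) as [Hg2 HE2].
  fold g1 in Hg1; fold g2 in Hg2; fold E1 in HE1; fold E2 in HE2; lra.
Qed.

End PotentialBoundedBelow.

(** * The case [kappa = 0] *)

Definition zero_energy_sol (b : R -> R) (x : R) : R :=
  exp (RInt b 1 x) * RInt (fun t => exp (- 2 * RInt b 1 t)) 1 x.

Definition zero_energy_sol_deriv (b : R -> R) (x : R) : R :=
  b x * zero_energy_sol b x + exp (- RInt b 1 x).

Section ZeroEnergy.

Variable b : R -> R.
Hypothesis b_C1 : C1_pos b.

Let B (y : R) : R := RInt b 1 y.
Let S (y : R) : R := RInt (fun t => exp (- 2 * B t)) 1 y.

Let is_derive_B x : 0 < x -> is_derive B x (b x).
Proof. apply is_derive_RInt_b; intros y Hy; apply b_C1, Hy. Qed.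

Let cont_exp_B : cont_on_pos (fun t => exp (- 2 * B t)).
Proof.
  intros t Ht; apply continuous_Rexp, continuous_Rmult;
    [apply continuous_const | eapply is_derive_continuous_R, is_derive_B, Ht].
Qed.

Let is_derive_S x : 0 < x -> is_derive S x (exp (- 2 * B x)).
Proof. intros Hx; apply (is_derive_RInt_pos (fun t => exp (- 2 * B t))), cont_exp_B; auto. Qed.

Let S_pos x : 1 < x -> 0 < S x.
Proof.
  intros Hx; apply RInt_gt_0; auto; [intros; apply exp_pos |].
  intros t Ht; apply cont_exp_B; lra.
Qed.

Lemma zero_energy_sol_derive x : 0 < x ->
  is_derive (zero_energy_sol b) x (zero_energy_sol_deriv b x) /\
  is_derive (zero_energy_sol_deriv b) x ((b x ^ 2 + Derive b x) * zero_energy_sol b x).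
Proof.
  intros Hx; assert (E1 := is_derive_B x Hx); assert (E2 := is_derive_S x Hx).
  assert (E3 : is_derive b x (Derive b x)) by (apply Derive_correct, b_C1, Hx).
  assert (Hexp : exp (- B x) = exp (B x) * exp (- 2 * B x)) by (rewrite <- exp_plus; f_equal; ring).
  assert (D1 : is_derive (fun y => exp (B y) * S y) x (b x * (exp (B x) * S x) + exp (- B x)))
    by (auto_derive; [ex_derive_hyps | rewrite_derive_hyps; rewrite Hexp; ring]).
  assert (D2 : is_derive (fun y => b y * (exp (B y) * S y) + exp (- B y)) x
                 ((b x ^ 2 + Derive b x) * (exp (B x) * S x)))
    by (auto_derive; [ex_derive_hyps | rewrite_derive_hyps; rewrite Hexp; ring]).
  exact (conj D1 D2).
Qed.

(* [w^2 + 1/w^2 >= 2] with [1/w^2 = S'/S^2], so [int w^2 >= 2 X + 1/S(X) - C]. *)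
Lemma zero_energy_sol_not_sq_integrable a0 : 1 <= a0 ->
  forall M, exists X, a0 <= X /\ M < RInt (fun x => zero_energy_sol b x ^ 2) a0 X.
Proof.
  intros Ha0 M.
  assert (CS : cont_on_pos S) by (intros x Hx; eapply is_derive_continuous_R, is_derive_S, Hx).
  assert (Cw : cont_on_pos (fun x => zero_energy_sol b x ^ 2)).
  { intros t Ht; change (continuous (fun x => (exp (B x) * S x) ^ 2) t).
    generalize (is_derive_continuous_R _ _ _ (is_derive_B t Ht)) (CS t Ht); intros.
    solve_continuous. }
  set (a1 := a0 + 1); set (X := a1 + (Rabs M + / S a1 + 1)).
  assert (Hs1 : 0 < / S a1) by (apply Rinv_0_lt_compat, S_pos; unfold a1; lra).
  assert (HX : a1 <= X) by (unfold X; generalize (Rabs_pos M); lra).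
  exists X; split; [unfold a1 in HX; lra |].
  set (h := fun x => 2 - exp (- 2 * B x) / S x ^ 2).
  assert (Ch : forall t, a1 <= t <= X -> continuous h t).
  { intros t Ht; assert (0 < S t) by (apply S_pos; unfold a1 in Ht; lra).
    generalize (cont_exp_B t ltac:(unfold a1 in Ht; lra)) (CS t ltac:(unfold a1 in Ht; lra)); intros.
    unfold h; solve_continuous. }
  assert (T1 : RInt h a1 X <= RInt (fun x => zero_energy_sol b x ^ 2) a1 X).
  { apply RInt_le_on; auto; [intros t Ht; apply Cw; unfold a1 in Ht; lra |].
    intros x Hx; assert (0 < S x) by (apply S_pos; unfold a1 in Hx; lra).
    unfold h; change (zero_energy_sol b x) with (exp (B x) * S x).
    set (u := exp (B x) * S x); assert (Hu : 0 < u) by (apply Rmult_lt_0_compat; auto; apply exp_pos).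
    replace (exp (- 2 * B x) / S x ^ 2) with ((/ u) ^ 2)
      by (unfold u; replace (- 2 * B x) with (- (B x + B x)) by ring;
          rewrite exp_Ropp, exp_plus; field; split; [apply exp_neq_0 | apply Rgt_not_eq; lra]).
    assert (0 <= (u - / u) ^ 2) by apply pow2_ge_0.
    assert (u * / u = 1) by (field; apply Rgt_not_eq; lra); nra. }
  assert (T2 : RInt h a1 X = (2 * X + / S X) - (2 * a1 + / S a1)).
  { apply (RInt_derive_on (fun x => 2 * x + / S x)); auto.
    intros x Hx; assert (0 < S x) by (apply S_pos; unfold a1 in Hx; lra).
    assert (E := is_derive_S x ltac:(unfold a1 in Hx; lra)).
    unfold h; auto_derive; [ex_derive_hyps; lra | rewrite_derive_hyps; field; lra]. }
  assert (T3 : RInt (fun x => zero_energy_sol b x ^ 2) a1 X <= RInt (fun x => zero_energy_sol b x ^ 2) a0 X)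
    by (apply RInt_nonneg_mono_l; auto; unfold a1; try lra; intros; apply pow2_ge_0).
  assert (0 < / S X) by (apply Rinv_0_lt_compat, S_pos; unfold a1 in HX; lra).
  generalize (Rle_abs M); unfold X in *; lra.
Qed.

End ZeroEnergy.

Lemma sq_lin_comb_le k1 k2 u v : (k1 * u + k2 * v) ^ 2 <= (k1 ^ 2 + k2 ^ 2) * (u ^ 2 + v ^ 2).
Proof. generalize (pow2_ge_0 (k1 * v - k2 * u)); nra. Qed.

Lemma sq_variation_of_constants_le p1 q1 p2 q2 z1 z2 z3 z4 :
  (p2 * z1 - q2 * z2 - p1 * z3 + q1 * z4) ^ 2
  <= 4 * ((p1 ^ 2 + q1 ^ 2) + (p2 ^ 2 + q2 ^ 2)) * (z1 ^ 2 + z2 ^ 2 + z3 ^ 2 + z4 ^ 2).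
Proof.
  set (A := p2 * z1); set (B := q2 * z2); set (C := p1 * z3); set (D := q1 * z4).
  assert (H4 : (A - B - C + D) ^ 2 <= 4 * (A ^ 2 + B ^ 2 + C ^ 2 + D ^ 2)).
  { generalize (pow2_ge_0 (A + B)) (pow2_ge_0 (A + C)) (pow2_ge_0 (A - D)) (pow2_ge_0 (B - C))
      (pow2_ge_0 (B + D)) (pow2_ge_0 (C + D)); nra. }
  eapply Rle_trans; [exact H4 |]; rewrite Rmult_assoc; apply Rmult_le_compat_l; [lra |].
  unfold A, B, C, D; rewrite !Rpow_mult_distr.
  generalize (pow2_ge_0 p1) (pow2_ge_0 q1) (pow2_ge_0 p2) (pow2_ge_0 q2)
    (pow2_ge_0 z1) (pow2_ge_0 z2) (pow2_ge_0 z3) (pow2_ge_0 z4); nra.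
Qed.

Lemma sq_le_of_derive_lin_comb (z p q w : R -> R) k1 k2 m a0 eps x : 0 < a0 -> a0 <= x ->
  (forall t, 0 < t -> is_derive z t ((k1 * p t + k2 * q t) * w t)) ->
  cont_on_pos p -> cont_on_pos q -> cont_on_pos w -> k1 ^ 2 + k2 ^ 2 <= m ->
  RInt (fun t => p t ^ 2 + q t ^ 2) a0 x <= eps ->
  z x ^ 2 <= 2 * z a0 ^ 2 + 2 * (m * eps) * RInt (fun t => w t ^ 2) a0 x.
Proof.
  intros Ha0 Hx Dz Cp Cq Cw Hm Heps.
  set (v := fun t => k1 * p t + k2 * q t).
  assert (Cv : cont_on_pos v) by (unfold v; solve_cont_on_pos).
  assert (Hinc : (z x - z a0) ^ 2 <= RInt (fun t => v t ^ 2) a0 x * RInt (fun t => w t ^ 2) a0 x).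
  { rewrite <- (RInt_derive_pos z (fun t => v t * w t)) by
      (auto; solve_cont_on_pos).
    apply RInt_Cauchy_Schwarz; auto. }
  assert (Hv : RInt (fun t => v t ^ 2) a0 x <= m * eps).
  { apply Rle_trans with (RInt (fun t => m * (p t ^ 2 + q t ^ 2)) a0 x).
    - apply RInt_le_pos; auto.
      + solve_cont_on_pos.
      + solve_cont_on_pos.
      + intros t _; eapply Rle_trans; [apply sq_lin_comb_le |].
        apply Rmult_le_compat_r; [nra | auto].
    - rewrite RInt_scal_pos by (auto; lra || solve_cont_on_pos).
      assert (0 <= m) by nra.
      apply Rmult_le_compat_l; auto. }
  assert (HU : 0 <= RInt (fun t => w t ^ 2) a0 x)
    by (apply RInt_ge_0_pos; auto; [solve_cont_on_pos |
                                    intros; apply pow2_ge_0]).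
  assert (HvU : RInt (fun t => v t ^ 2) a0 x * RInt (fun t => w t ^ 2) a0 x
                <= m * eps * RInt (fun t => w t ^ 2) a0 x) by (apply Rmult_le_compat_r; auto).
  generalize (pow2_ge_0 (z a0 + (z x - z a0))) (pow2_ge_0 (z a0 - (z x - z a0))); nra.
Qed.

Section WeylAlternative.

Variables (a : R -> R) (c al : R) (p1 P1 q1 Q1 p2 P2 q2 Q2 w W : R -> R).
Hypotheses (S1 : schrodinger_sol a c p1 P1 q1 Q1) (S2 : schrodinger_sol a c p2 P2 q2 Q2).
Hypothesis W1 : forall x, 1 <= x -> wronskian p1 P1 q1 Q1 p2 P2 q2 Q2 x = 1.
Hypothesis w_sol : forall x, 0 < x -> is_derive w x (W x) /\ is_derive W x ((a x - 2 * al) * w x).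

Let m := 4 * al ^ 2 + c ^ 2.
Let U (a0 X : R) : R := RInt (fun x => w x ^ 2) a0 X.

Let w_cont : cont_on_pos w.
Proof. intros x Hx; eapply is_derive_continuous_R, (proj1 (w_sol x Hx)). Qed.

Let U_ge_0 a0 X : 0 < a0 -> a0 <= X -> 0 <= U a0 X.
Proof.
  intros; apply RInt_ge_0_pos; auto; [solve_cont_on_pos |].
  intros; apply pow2_ge_0.
Qed.

(* [z = psi W - psi' w] is the coefficient of [psi] in the variation of constants formula for [w]. *)
Lemma variation_coeff_sq_le p P q Q a0 eps x : schrodinger_sol a c p P q Q -> 1 <= a0 -> a0 <= x ->
  RInt (fun t => p t ^ 2 + q t ^ 2) a0 x <= eps ->
  (p x * W x - P x * w x) ^ 2 <= 2 * (p a0 * W a0 - P a0 * w a0) ^ 2 + 2 * (m * eps) * U a0 x /\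
  (q x * W x - Q x * w x) ^ 2 <= 2 * (q a0 * W a0 - Q a0 * w a0) ^ 2 + 2 * (m * eps) * U a0 x.
Proof.
  intros S Ha0 Hx Heps; destruct (schrodinger_sol_cont a c p P q Q S) as (Cp & _ & Cq & _).
  split.
  - apply (sq_le_of_derive_lin_comb (fun y => p y * W y - P y * w y) p q w (- 2 * al) c); auto; try lra.
    + intros t Ht; destruct (S t Ht) as (? & ? & ? & ?); destruct (w_sol t Ht).
      auto_derive; [ex_derive_hyps | rewrite_derive_hyps; ring].
    + unfold m; lra.
  - apply (sq_le_of_derive_lin_comb (fun y => q y * W y - Q y * w y) p q w (- c) (- 2 * al)); auto; try lra.
    + intros t Ht; destruct (S t Ht) as (? & ? & ? & ?); destruct (w_sol t Ht).
      auto_derive; [ex_derive_hyps | rewrite_derive_hyps; ring].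
    + unfold m; lra.
Qed.

Let Z0 (a0 : R) : R :=
  (p1 a0 * W a0 - P1 a0 * w a0) ^ 2 + (q1 a0 * W a0 - Q1 a0 * w a0) ^ 2
  + (p2 a0 * W a0 - P2 a0 * w a0) ^ 2 + (q2 a0 * W a0 - Q2 a0 * w a0) ^ 2.

Let Z0_ge_0 a0 : 0 <= Z0 a0.
Proof. unfold Z0; repeat apply Rplus_le_le_0_compat; apply pow2_ge_0. Qed.

Let m_ge_0 : 0 <= m.
Proof. unfold m; nra. Qed.

Lemma w_sq_le a0 eps X x : 1 <= a0 -> 0 <= eps -> a0 <= x <= X ->
  RInt (fun x => p1 x ^ 2 + q1 x ^ 2) a0 x <= eps -> RInt (fun x => p2 x ^ 2 + q2 x ^ 2) a0 x <= eps ->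
  w x ^ 2 <= 4 * (2 * Z0 a0 + 8 * (m * eps) * U a0 X) * ((p1 x ^ 2 + q1 x ^ 2) + (p2 x ^ 2 + q2 x ^ 2)).
Proof.
  intros Ha0 Heps Hx G1 G2.
  assert (HUx : U a0 x <= U a0 X)
    by (apply RInt_nonneg_mono_r; try lra; [solve_cont_on_pos | intros; apply pow2_ge_0]).
  destruct (variation_coeff_sq_le p1 P1 q1 Q1 a0 eps x S1 Ha0 ltac:(lra) G1) as [Z1 Z2].
  destruct (variation_coeff_sq_le p2 P2 q2 Q2 a0 eps x S2 Ha0 ltac:(lra) G2) as [Z3 Z4].
  assert (Hid : w x = p2 x * (p1 x * W x - P1 x * w x) - q2 x * (q1 x * W x - Q1 x * w x)
                      - p1 x * (p2 x * W x - P2 x * w x) + q1 x * (q2 x * W x - Q2 x * w x)).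
  { rewrite <- (Rmult_1_r (w x)) at 1; rewrite <- (W1 x) by lra; unfold wronskian; ring. }
  rewrite Hid; eapply Rle_trans; [apply sq_variation_of_constants_le |].
  apply Rle_trans with (4 * ((p1 x ^ 2 + q1 x ^ 2) + (p2 x ^ 2 + q2 x ^ 2))
                        * (2 * Z0 a0 + 8 * (m * eps) * U a0 X)); [| right; ring].
  apply Rmult_le_compat_l;
    [apply Rmult_le_pos; [lra | repeat apply Rplus_le_le_0_compat; apply pow2_ge_0] |].
  assert (m * eps * U a0 x <= m * eps * U a0 X)
    by (apply Rmult_le_compat_l; [apply Rmult_le_pos; [apply m_ge_0 | lra] | lra]).
  unfold Z0; lra.
Qed.

(* By the Wronskian identity [w = Re (psi2 z1 - psi1 z2)], and each [z] grows like [sqrt (eps U)]. *)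
Lemma RInt_w_sq_absorb a0 eps : 1 <= a0 -> 0 <= eps ->
  (forall X, a0 <= X -> RInt (fun x => p1 x ^ 2 + q1 x ^ 2) a0 X <= eps) ->
  (forall X, a0 <= X -> RInt (fun x => p2 x ^ 2 + q2 x ^ 2) a0 X <= eps) ->
  forall X, a0 <= X -> U a0 X <= 16 * eps * Z0 a0 + 64 * m * eps ^ 2 * U a0 X.
Proof.
  intros Ha0 Heps G1 G2 X HX.
  destruct (schrodinger_sol_cont a c p1 P1 q1 Q1 S1) as (Cp1 & _ & Cq1 & _).
  destruct (schrodinger_sol_cont a c p2 P2 q2 Q2 S2) as (Cp2 & _ & Cq2 & _).
  set (K := 4 * (2 * Z0 a0 + 8 * (m * eps) * U a0 X)).
  apply Rle_trans with (RInt (fun x => K * ((p1 x ^ 2 + q1 x ^ 2) + (p2 x ^ 2 + q2 x ^ 2))) a0 X).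
  - apply RInt_le_pos; try lra; try solve_cont_on_pos.
    intros x Hx; apply w_sq_le; auto; [apply G1 | apply G2]; lra.
  - rewrite RInt_scal_pos, RInt_plus_pos by (try lra; solve_cont_on_pos).
    assert (HmeU : 0 <= m * eps * U a0 X)
      by (apply Rmult_le_pos; [apply Rmult_le_pos | apply U_ge_0]; lra).
    assert (0 <= K) by (unfold K; generalize (Z0_ge_0 a0); lra).
    apply Rle_trans with (K * (2 * eps));
      [generalize (G1 X HX) (G2 X HX); intros; apply Rmult_le_compat_l; lra |].
    unfold K; right; ring.
Qed.

Lemma not_sq_integrable_pair_of_nonsq_sol :
  (forall a0, 1 <= a0 -> forall M, exists X, a0 <= X /\ M < RInt (fun x => w x ^ 2) a0 X) ->
  sq_integrable p1 q1 -> sq_integrable p2 q2 -> False.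
Proof.
  intros Unb L1 L2.
  destruct (schrodinger_sol_cont a c p1 P1 q1 Q1 S1) as (Cp1 & _ & Cq1 & _).
  destruct (schrodinger_sol_cont a c p2 P2 q2 Q2 S2) as (Cp2 & _ & Cq2 & _).
  assert (Hm := m_ge_0).
  set (eps := / (16 * (m + 1))).
  assert (He : 0 < eps) by (unfold eps; apply Rinv_0_lt_compat; lra).
  assert (He16 : eps * (16 * (m + 1)) = 1) by (unfold eps; field; lra).
  assert (Cg : forall p q : R -> R, cont_on_pos p -> cont_on_pos q ->
                                    cont_on_pos (fun x => p x ^ 2 + q x ^ 2))
    by (intros p q Cp Cq; solve_cont_on_pos).
  destruct (RInt_tail_small_of_ex_RInt_gen _ L1 (Cg p1 q1 Cp1 Cq1) eps He) as (a1 & Ha1 & T1).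
  destruct (RInt_tail_small_of_ex_RInt_gen _ L2 (Cg p2 q2 Cp2 Cq2) eps He) as (a2 & Ha2 & T2).
  set (a0 := Rmax a1 a2).
  assert (Ha01 : a1 <= a0) by apply Rmax_l; assert (Ha02 : a2 <= a0) by apply Rmax_r.
  assert (Tail : forall (p q : R -> R) a', cont_on_pos p -> cont_on_pos q -> 1 <= a' -> a' <= a0 ->
             (forall X, a' <= X -> RInt (fun x => p x ^ 2 + q x ^ 2) a' X <= eps) ->
             forall X, a0 <= X -> RInt (fun x => p x ^ 2 + q x ^ 2) a0 X <= eps).
  { intros p q a' Cp Cq H1 H2 T X HX.
    apply Rle_trans with (RInt (fun x => p x ^ 2 + q x ^ 2) a' X); [| apply T; lra].
    apply RInt_nonneg_mono_l; try lra; auto; intros; nra. }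
  (* [RInt_w_sq_absorb] gives [U <= 16 eps Z0 + U / 4], i.e. [U <= 64/3 eps Z0]. *)
  destruct (Unb a0 ltac:(lra) (22 * eps * Z0 a0)) as (X & HX & Hbig).
  change (22 * eps * Z0 a0 < U a0 X) in Hbig.
  assert (Habs := RInt_w_sq_absorb a0 eps ltac:(lra) ltac:(lra)
                    (Tail p1 q1 a1 Cp1 Cq1 Ha1 Ha01 T1) (Tail p2 q2 a2 Cp2 Cq2 Ha2 Ha02 T2) X HX).
  assert (Hsmall : 64 * m * eps ^ 2 <= / 4) by nra.
  assert (0 <= U a0 X) by (apply U_ge_0; lra).
  assert (0 <= Z0 a0) by apply Z0_ge_0.
  nra.
Qed.

End WeylAlternative.

Lemma schrodinger_potential_cont b kappa : C1_pos b -> cont_on_pos kappa ->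
  cont_on_pos (schrodinger_potential b kappa).
Proof.
  intros Hb Hk t Ht; destruct (Hb t Ht) as [Hd Hd']; assert (Hkt := Hk t Ht).
  assert (continuous b t) by (apply (ex_derive_continuous (K := R_AbsRing) (V := R_NormedModule)); auto).
  unfold schrodinger_potential; solve_continuous.
Qed.

Lemma schrodinger_potential_lower_bound b kappa al C z0 :
  (forall z, z0 < z -> C <= / (z ^ 2) * schrodinger_potential b kappa z) ->
  forall x, Rmax z0 1 < x -> (C - 2 * Rabs al) * x ^ 2 <= schrodinger_potential b kappa x + 2 * al.
Proof.
  intros Hz x Hx; generalize (Rmax_l z0 1) (Rmax_r z0 1); intros.
  assert (H1 : 1 <= x ^ 2) by (rewrite <- (pow1 2); apply pow_incr; lra).
  specialize (Hz x ltac:(lra)); apply (Rmult_le_compat_l (x ^ 2)) in Hz; [| lra].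
  rewrite <- Rmult_assoc, Rinv_r, Rmult_1_l in Hz by lra.
  generalize (Rle_abs al) (Rle_abs (- al)) (Rabs_pos al); rewrite Rabs_Ropp; intros; nra.
Qed.

Theorem lemma2p1 (b kappa : R -> R) :
  C1_pos b ->
  (forall x, 0 < x -> continuous kappa x) ->
  (forall x, 0 < x -> 0 <= kappa x) ->
  regular_at_0 b ->
  inaccessible_at_infty b ->
  ((exists C z0 : R, forall z, z0 < z ->
       C <= / (z ^ 2) * (b z ^ 2 + Derive b z + 2 * kappa z))
   \/ (forall x, 0 < x -> kappa x = 0)) ->
  limit_point_at_infty b kappa.
Proof.
  intros Hb Hk _ _ _ Hcase [al [be LC]].
  set (a := fun x => schrodinger_potential b kappa x + 2 * al).
  assert (Ha : cont_on_pos a)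
    by (assert (HV := schrodinger_potential_cont b kappa Hb Hk); unfold a; solve_cont_on_pos).
  destruct (schrodinger_fundamental_pair a (2 * be) Ha)
    as (p1 & P1 & q1 & Q1 & p2 & P2 & q2 & Q2 & S1 & S2 & W1).
  assert (L2 : forall p P q Q, schrodinger_sol a (2 * be) p P q Q -> sq_integrable p q).
  { intros p P q Q S; apply (sq_integrable_of_L2_near_infty b), LC.
    apply (eigensol_of_schrodinger_sol b kappa al be p P q Q); [intros x Hx; apply Hb, Hx | exact S]. }
  destruct Hcase as [[C [z0 Hz]] | Hk0].
  - apply (not_sq_integrable_pair_of_lower_bound a (2 * be) p1 P1 q1 Q1 p2 P2 q2 Q2 Ha S1 S2 W1
             (C - 2 * Rabs al) (Rmax z0 1)); eauto.
    apply schrodinger_potential_lower_bound, Hz.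
  - apply (not_sq_integrable_pair_of_nonsq_sol a (2 * be) al p1 P1 q1 Q1 p2 P2 q2 Q2
             (zero_energy_sol b) (zero_energy_sol_deriv b) S1 S2 W1); eauto.
    + intros x Hx; destruct (zero_energy_sol_derive b Hb x Hx) as [D1 D2]; split; auto.
      replace (a x - 2 * al) with (b x ^ 2 + Derive b x)
        by (unfold a, schrodinger_potential; rewrite Hk0; auto; ring).
      exact D2.
    + intros a0 Ha0; apply zero_energy_sol_not_sq_integrable; auto.
Qed.
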